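(* Let $p \ge 3$ and let $B_p$ be the graph obtained from the complete bipartite graph $K_{p,p}$ by deleting the edges of a perfect matching. Then $B_p$ is $(K_4, \text{diamond}, \text{paw}, \text{co-claw}, \text{co-diamond})$-free, $B_p$ is $2$-colourable, and $B_p$ has a frozen $p$-colouring.
   Context: All graphs are finite and simple. A $k$-colouring is a proper colouring with colours $\{1,\dots,k\}$. A $k$-colouring is frozen if, for every vertex $v$, all $k$ colours appear in the closed neighbourhood of $v$. $\mathcal{H}$-free means no induced subgraph isomorphic to a member of $\mathcal{H}$. The diamond is $K_4$ minus an edge; the paw is a triangle with a pendant vertex attached to one triangle vertex; the co-claw is $K_3+K_1$; the co-diamond is $K_2+2K_1$ (one edge plus two isolated vertices). *)

From mathcomp Require Import all_boot all_order.
Set Implicit Arguments. Unset Strict Implicit. Unset Printing Implicit Defensive.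

Definition simple_graph (V : finType) (e : rel V) : Prop :=
  (forall x y, e x y = e y x) /\ (forall x, ~~ e x x).

Definition induced_sub (W : finType) (eH : rel W) (V : finType) (eG : rel V) : Prop :=
  exists f : W -> V, injective f /\
    forall x y, x != y -> eG (f x) (f y) = eH x y.

Definition from_edges (s : seq (nat * nat)) : rel 'I_4 :=
  fun x y => ((nat_of_ord x, nat_of_ord y) \in s) || ((nat_of_ord y, nat_of_ord x) \in s).

Definition K4_g : rel 'I_4 := from_edges [:: (0,1); (0,2); (0,3); (1,2); (1,3); (2,3)].
(* diamond = K4 minus the edge {0,1} *)
Definition diamond_g : rel 'I_4 := from_edges [:: (0,2); (0,3); (1,2); (1,3); (2,3)].
(* paw = triangle 0,1,2 plus pendant vertex 3 attached to 0 *)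
Definition paw_g : rel 'I_4 := from_edges [:: (0,1); (0,2); (1,2); (0,3)].
(* co-claw = K3 + K1 : triangle 0,1,2 and isolated vertex 3 *)
Definition coclaw_g : rel 'I_4 := from_edges [:: (0,1); (0,2); (1,2)].
(* co-diamond = K2 + 2K1 : edge 0-1, isolated vertices 2 and 3 *)
Definition codiamond_g : rel 'I_4 := from_edges [:: (0,1)].

Definition lemma2_free (V : finType) (e : rel V) : Prop :=
  ~ induced_sub K4_g e /\ ~ induced_sub diamond_g e /\ ~ induced_sub paw_g e /\
  ~ induced_sub coclaw_g e /\ ~ induced_sub codiamond_g e.

(* k-colourings: colours are 'I_k (i.e. {0,...,k-1} in place of {1,...,k}). *)
Definition proper_colouring (V : finType) (e : rel V) (k : nat) (c : V -> 'I_k) : Prop :=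
  forall x y, e x y -> c x != c y.

Definition colourable (V : finType) (e : rel V) (k : nat) : Prop :=
  exists c : V -> 'I_k, proper_colouring e c.

Definition frozen_colouring (V : finType) (e : rel V) (k : nat) (c : V -> 'I_k) : Prop :=
  proper_colouring e c /\
  forall (v : V) (i : 'I_k), exists u : V, ((u == v) || e v u) /\ c u = i.

(* B_p: K_{p,p} minus a perfect matching. Vertices (i, side) with i < p;
   (i,a) ~ (j,b) iff a, b are different sides and i != j. *)
Definition Bp_adj (p : nat) : rel ('I_p * bool) :=
  fun x y => (x.2 != y.2) && (x.1 != y.1).
Arguments Bp_adj p : clear implicits.

(* B_p is bipartite, so it has no triangle; this excludes K4, the diamond, the
   paw and the co-claw, which all contain one.  The two common non-neighbours
   of an edge (i,a)(j,b) of B_p are (i,b) and (j,a), which are adjacent; hence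
   there is no co-diamond.  Colouring each vertex by its side gives a proper
   2-colouring, and colouring (i,a) by i gives a frozen p-colouring, since
   (i,a) sees every other colour j through (j,~~a). *)
From mathcomp Require Import all_boot all_order.

Local Notation vertex n := (@Ordinal 4 n isT).

Definition triangle_free {V : finType} (e : rel V) : Prop :=
  forall x y z, e x y -> e y z -> e x z -> False.

Section InducedSubgraphs.

Context {V : finType} {e : rel V}.

Lemma two_colourable_triangle_free : colourable e 2 -> triangle_free e.
Proof.
move=> [c c_proper] x y z /c_proper cxy /c_proper cyz /c_proper cxz.
by move: (c x) (c y) (c z) cxy cyz cxz => [[|[|//]] ?] [[|[|//]] ?] [[|[|//]] ?].
Qed.

Lemma triangle_free_not_induced : triangle_free e ->
  forall (W : finType) (eH : rel W) (a b c : W),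
  [&& a != b, b != c & a != c] -> [&& eH a b, eH b c & eH a c] ->
  ~ induced_sub eH e.
Proof.
move=> tri_free W eH a b c.
case/and3P=> ab bc ac /and3P[hab hbc hac] [f [_ f_induced]].
by apply: (tri_free (f a) (f b) (f c)); rewrite f_induced.
Qed.

Lemma codiamond_not_induced :
  (forall x y z w, e x y -> ~~ e x z -> ~~ e y z -> ~~ e x w -> ~~ e y w ->
     z != w -> e z w) ->
  ~ induced_sub codiamond_g e.
Proof.
move=> non_neighbours_adj [f [f_inj f_induced]].
suff: e (f (vertex 2)) (f (vertex 3)) by rewrite f_induced.
by apply: (non_neighbours_adj (f (vertex 0)) (f (vertex 1)));
  rewrite ?(inj_eq f_inj) ?f_induced.
Qed.

End InducedSubgraphs.

Section Bp.

Variable p : nat.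

Local Notation Bp := (Bp_adj p).

Lemma Bp_simple : simple_graph Bp.
Proof.
split=> [x y | x]; last by rewrite /Bp_adj eqxx.
by rewrite /Bp_adj eq_sym [x.1 == _]eq_sym.
Qed.

Lemma Bp_non_neighbours_adj (x y z w : 'I_p * bool) :
  Bp x y -> ~~ Bp x z -> ~~ Bp y z -> ~~ Bp x w -> ~~ Bp y w ->
  z != w -> Bp z w.
Proof.
case: x y z w => [i [|]] [j [|]] [k [|]] [l [|]];
  rewrite /Bp_adj /= ?negbK ?andbT ?andbF ?xpair_eqE ?andbT //=.
all: move=> ij; repeat move=> /eqP ?; subst.
all: by rewrite ?eqxx // eq_sym.
Qed.

Definition Bp_side (x : 'I_p * bool) : 'I_2 :=
  if x.2 then ord_max else ord0.

Lemma Bp_side_proper : proper_colouring Bp Bp_side.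
Proof. by case=> [i [|]] [j [|]]; rewrite /Bp_adj /Bp_side. Qed.

Lemma Bp_index_frozen : frozen_colouring Bp (fun x => x.1).
Proof.
split=> [x y /andP[] // | [i a] j].
have [-> | ji] := eqVneq j i; first by exists (i, a); rewrite eqxx.
exists (j, ~~ a); split=> //; apply/orP; right.
by rewrite /Bp_adj /= (eq_sym i) ji andbT; case: a.
Qed.

End Bp.

Theorem lemma2 (p : nat) (hp : 3 <= p) :
  simple_graph (Bp_adj p) /\
  lemma2_free (Bp_adj p) /\
  colourable (Bp_adj p) 2 /\
  (exists c : 'I_p * bool -> 'I_p, frozen_colouring (Bp_adj p) c).
Proof.
have Bp_bipartite : colourable (Bp_adj p) 2.
  by exists (Bp_side p); apply: Bp_side_proper.
have no_triangle := triangle_free_not_induced (two_colourable_triangle_free Bp_bipartite).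
split; first exact: Bp_simple.
split.
  split; first exact: (no_triangle _ _ (vertex 0) (vertex 1) (vertex 2)).
  split; first exact: (no_triangle _ _ (vertex 0) (vertex 2) (vertex 3)).
  split; first exact: (no_triangle _ _ (vertex 0) (vertex 1) (vertex 2)).
  split; first exact: (no_triangle _ _ (vertex 0) (vertex 1) (vertex 2)).
  exact/codiamond_not_induced/Bp_non_neighbours_adj.
split; first exact: Bp_bipartite.
by exists (fun x => x.1); apply: Bp_index_frozen.
Qed.
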